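(* Let $X$ be a $G$-space such that the orbit map $\rho_X\colon X\to X/G$ is a fibration. Then (1) $\mathrm{cat}^{G,\infty}(X)=\mathrm{cat}^{G,2}(X)=\mathrm{cat}(\rho_X)\le\mathrm{cat}(X/G)$, and (2) $\mathrm{TC}^{G,\infty}(X)=\mathrm{TC}^{G,2}(X)\le\mathrm{TC}(X/G)$.
   Context: All spaces are well-pointed CW complexes, $G$ a topological group acting cellularly; $x_0\in X$ is the base point. $\mathrm{cat}$, $\mathrm{TC}$ are reduced LS category and topological complexity; for a map $f\colon X\to Y$, $\mathrm{cat}(f)$ is the least $n\ge 0$ such that $X$ is covered by $n+1$ open sets on each of which $f$ is nullhomotopic. $PX$ is the path space; $\mathcal{P}_k(X)=\{(\gamma_1,\dots,\gamma_k)\in(PX)^k\mid G\gamma_i(1)=G\gamma_{i+1}(0),\ 1\le i\le k-1\}$, $\pi_k(\gamma_1,\dots,\gamma_k)=(\gamma_1(0),\gamma_k(1))\in X\times X$. $\mathrm{secat}$ is reduced sectional category (least $n$ such that the base is covered by $n+1$ open sets each admitting a homotopy section). $\mathrm{TC}^{G,k}(X)=\mathrm{secat}(\pi_k)$, $\mathrm{TC}^{G,\infty}(X)=\min_k\mathrm{TC}^{G,k}(X)$. $P^k_*(X)=\{(\gamma_1,\dots,\gamma_k)\in\mathcal{P}_k(X)\mid\gamma_1(0)=x_0\}$, $q_k(\gamma_1,\dots,\gamma_k)=\gamma_k(1)$, $\mathrm{cat}^{G,k}(X)=\mathrm{secat}(q_k)$, $\mathrm{cat}^{G,\infty}(X)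=\min_k\mathrm{cat}^{G,k}(X)$.
   Formalization: The orbit space X/G is also assumed path-connected, and fibration means Hurewicz fibration (homotopy lifting with respect to all spaces). Apart from conventions, each condition added here is assumed in the paper as well or is needed for the statement above to hold. *)

From HB Require Import structures.
From mathcomp Require Import all_boot all_order all_algebra generic_quotient.
From mathcomp Require Import mathcomp_extra boolp classical_sets functions.
From mathcomp Require Import set_interval reals topology.
From mathcomp Require Import Rstruct Rstruct_topology.
From Stdlib Require Rdefinitions.
Import Order.TTheory GRing.Theory Num.Theory.
Local Notation R := Rdefinitions.R.

Set Implicit Arguments.
Unset Strict Implicit.
Unset Printing Implicit Defensive.

Local Open Scope classical_set_scope.
Local Open Scope ring_scope.
Local Open Scope quotient_scope.

Definition unit_interval : set R := `[0%R, 1%R].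
Definition I01 : topologicalType := set_type unit_interval.

Lemma i0_mem : (0%R : R) \in unit_interval.
Proof. by apply/mem_set; rewrite /unit_interval /= in_itv /= lexx ler01. Qed.
Lemma i1_mem : (1%R : R) \in unit_interval.
Proof. by apply/mem_set; rewrite /unit_interval /= in_itv /= lexx ler01. Qed.

Definition i0 : I01 := exist _ 0%R i0_mem.
Definition i1 : I01 := exist _ 1%R i1_mem.

Definition homotopic {A B : topologicalType} (f g : A -> B) : Prop :=
  exists H : A * I01 -> B, continuous H /\
    (forall a, H (a, i0) = f a) /\ (forall a, H (a, i1) = g a).

Definition nullhomotopic {A B : topologicalType} (f : A -> B) : Prop :=
  exists b : B, homotopic f (fun _ => b).

Definition path_connected (B : topologicalType) : Prop :=
  forall x y : B, exists g : I01 -> B,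
    continuous g /\ g i0 = x /\ g i1 = y.

Definition fibration {E B : topologicalType} (p : E -> B) : Prop :=
  forall (Z : topologicalType) (H : Z * I01 -> B) (h0 : Z -> E),
    continuous H -> continuous h0 -> (forall z, p (h0 z) = H (z, i0)) ->
    exists Ht : Z * I01 -> E, continuous Ht /\
      (forall zt, p (Ht zt) = H zt) /\ (forall z, Ht (z, i0) = h0 z).

(* Values in N u {oo}: None stands for infinity.                       *)
Definition natinf := option nat.

Definition natinf_le (a b : natinf) : Prop :=
  match a, b with
  | _, None => True
  | None, Some _ => False
  | Some m, Some n => (m <= n)%N
  end.

Definition least (P : nat -> Prop) : natinf :=
  match pselect (exists n, `[< P n >]) with
  | left h => Some (ex_minn h)
  | right _ => None
  end.

Definition natinf_min (f : nat -> natinf) : natinf :=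
  least (fun n => exists k, natinf_le (f k) (Some n)).

Definition open_cover_with {B : topologicalType} (n : nat)
    (Q : set B -> Prop) : Prop :=
  exists U : 'I_n.+1 -> set B,
    (forall i, open (U i)) /\ (\bigcup_i U i = setT) /\ (forall i, Q (U i)).

Definition has_homotopy_section {E B : topologicalType} (p : E -> B)
    (U : set B) : Prop :=
  exists s : U -> E, continuous s /\ homotopic (p \o s) (@set_val B U).

Definition secat {E B : topologicalType} (p : E -> B) : natinf :=
  least (fun n => open_cover_with n (has_homotopy_section p)).

Definition cat_map {A B : topologicalType} (f : A -> B) : natinf :=
  least (fun n => open_cover_with n
    (fun U : set A => nullhomotopic (f \o @set_val A U))).

Definition LScat (B : topologicalType) : natinf := cat_map (@idfun B).

Definition PX (X : topologicalType) : topologicalType :=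
  set_type [set f : {compact-open, I01 -> X} | continuous f].

Definition pev {X : topologicalType} (g : PX X) (t : I01) : X := set_val g t.

Definition path_fib (X : topologicalType) (g : PX X) : X * X :=
  (pev g i0, pev g i1).

Definition TC (X : topologicalType) : natinf := secat (@path_fib X).

Record topGroupAction (G X : topologicalType) := TopGroupAction {
  gmul : G -> G -> G;
  ginv : G -> G;
  gone : G;
  act : G -> X -> X;
  gmulA : forall a b c, gmul a (gmul b c) = gmul (gmul a b) c;
  gmul1 : forall a, gmul gone a = a;
  gmulV : forall a, gmul (ginv a) a = gone;
  gmul_cont : continuous (fun p : G * G => gmul p.1 p.2);
  ginv_cont : continuous ginv;
  act1 : forall x, act gone x = x;
  actM : forall g h x, act (gmul g h) x = act g (act h x);
  act_cont : continuous (fun p : G * X => act p.1 p.2)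
}.

Section Orbits.
Context {G X : topologicalType} (a : topGroupAction G X).

Definition same_orbit (x y : X) : Prop := exists g : G, act a g x = y.

Lemma same_orbit_refl x : same_orbit x x.
Proof. by exists (gone a); rewrite act1. Qed.

Lemma same_orbit_sym x y : same_orbit x y -> same_orbit y x.
Proof.
case=> g <-; exists (ginv a g).
by rewrite -actM gmulV act1.
Qed.

Lemma same_orbit_trans x y z : same_orbit x y -> same_orbit y z ->
  same_orbit x z.
Proof. by case=> g <- [h <-]; exists (gmul a h g); rewrite actM. Qed.

Definition orbit_rel : rel X := fun x y => `[< same_orbit x y >].

Lemma orbit_rel_refl : reflexive orbit_rel.
Proof. by move=> x; apply/asboolP; exact: same_orbit_refl. Qed.

Lemma orbit_rel_sym : symmetric orbit_rel.
Proof.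
move=> x y; apply/asboolP/asboolP; exact: same_orbit_sym.
Qed.

Lemma orbit_rel_trans : transitive orbit_rel.
Proof.
move=> y x z /asboolP h1 /asboolP h2; apply/asboolP.
exact: same_orbit_trans h1 h2.
Qed.

Definition orbit_equiv : equiv_rel X :=
  EquivRel orbit_rel orbit_rel_refl orbit_rel_sym orbit_rel_trans.

Definition OrbitSpace : topologicalType :=
  quotient_topology {eq_quot orbit_equiv}.

Definition orbit_map : X -> OrbitSpace := \pi_OrbitSpace.

Definition Pk (k : nat) : topologicalType :=
  set_type [set gs : {ptws 'I_k -> PX X} |
    forall i j : 'I_k, nat_of_ord j = (nat_of_ord i).+1 ->
      same_orbit (pev (gs i) i1) (pev (gs j) i0)].

Definition Pk_path {k} (gs : Pk k) (i : 'I_k) : PX X := set_val gs i.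

(* pi_k(gamma_1,...,gamma_k) = (gamma_1(0), gamma_k(1)) ; the index
   k is used for k >= 1 (for k = 0 we read it as k = 1) *)
Definition pi_k (k : nat) (gs : Pk k.-1.+1) : X * X :=
  (pev (Pk_path gs ord0) i0, pev (Pk_path gs ord_max) i1).

Definition TCG (k : nat) : natinf := secat (@pi_k k).

Definition TCGinf : natinf := natinf_min (fun k => TCG k.+1).

Definition Pk_star (x0 : X) (k : nat) : topologicalType :=
  set_type [set gs : Pk k.-1.+1 | pev (Pk_path gs ord0) i0 = x0].

Definition q_k (x0 : X) (k : nat) (gs : Pk_star x0 k) : X :=
  pev (Pk_path (set_val gs) ord_max) i1.

Definition catG (x0 : X) (k : nat) : natinf := secat (@q_k x0 k).

Definition catGinf (x0 : X) : natinf := natinf_min (fun k => catG x0 k.+1).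

End Orbits.

From mathcomp Require Import all_boot all_order all_algebra.
From mathcomp Require Import boolp classical_sets functions.
From mathcomp Require Import topology normedtype.
From mathcomp Require Import Rstruct_topology lra.
From Stdlib Require Rdefinitions.
Import Order.TTheory GRing.Theory Num.Theory.
Local Notation R := Rdefinitions.R.

Set Implicit Arguments.
Unset Strict Implicit.
Unset Printing Implicit Defensive.

Local Open Scope classical_set_scope.
Local Open Scope ring_scope.

(* Write rho for the orbit map.  A continuous family of chains
   (g_1, ..., g_k) in P_k(X) projects to a homotopy in X/G from
   rho (g_1 0) to rho (g_k 1), by concatenating the paths rho o g_i, whose
   consecutive ends agree in X/G.  Joined with a homotopy section of q_k
   over U, this makes rho nullhomotopic on U.  Conversely, lifting through
   the fibration rho a nullhomotopy of rho on U (from the inclusion) and a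
   path from rho x0 to the constant (from x0) gives two paths forming a
   section of q_2 over U.  Hence cat^{G,2}(X) <= cat(rho) <= cat^{G,k}(X)
   for every k.  In the same way, lifting the projected homotopy from g_1 0
   turns a section of pi_k into one of pi_2, and a motion planner of X/G
   over V lifts to a section of pi_2 over the preimage of V by rho x rho. *)

Section Continuity.
Context {A B C : topologicalType}.

Lemma comp_continuous (f : A -> B) (g : B -> C) :
  continuous f -> continuous g -> continuous (g \o f).
Proof. by move=> cf cg x; apply: continuous_comp; [exact: cf | exact: cg]. Qed.

Lemma pair_continuous (f : A -> B) (g : A -> C) :
  continuous f -> continuous g -> continuous (fun x => (f x, g x)).
Proof. by move=> cf cg x; apply: cvg_pair; [exact: cf | exact: cg]. Qed.

Lemma fst_continuous : continuous (fun p : A * B => p.1).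
Proof. by move=> p; exact: cvg_fst. Qed.

Lemma snd_continuous : continuous (fun p : A * B => p.2).
Proof. by move=> p; exact: cvg_snd. Qed.

Lemma set_val_continuous (U : set A) : continuous (@set_val A U).
Proof. exact: initial_continuous. Qed.

End Continuity.
Arguments set_val_continuous {A} U.

Lemma continuous_into_ptws {Z Y : topologicalType} {I : Type}
    (h : Z -> {ptws I -> Y}) :
  (forall i, continuous (fun z => h z i)) -> continuous h.
Proof.
move=> hc z; apply/cvg_sup => i.
exact: (@continuous_comp_initial _ _ _ (fun f : I -> Y => f i) h (hc i) z).
Qed.

Lemma ptws_eval_continuous {Y : topologicalType} {I : eqType} (i : I) :
  continuous (fun f : {ptws I -> Y} => f i).
Proof. exact: (@proj_continuous I (fun _ => Y) i). Qed.

Section UnitInterval.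

Definition ival (t : I01) : R := set_val t.

Lemma ival_continuous : continuous ival.
Proof. exact: set_val_continuous. Qed.

Lemma ival_inj : injective ival.
Proof. by move=> s t; rewrite /ival !set_valE; exact: val_inj. Qed.

Lemma ival_ge0_le1 (t : I01) : 0 <= ival t <= 1.
Proof.
case: t => r rI; rewrite /ival set_valE /=.
by move/set_mem: rI; rewrite /unit_interval /= in_itv.
Qed.

Lemma ival0 : ival i0 = 0. Proof. by rewrite /ival set_valE. Qed.
Lemma ival1 : ival i1 = 1. Proof. by rewrite /ival set_valE. Qed.

Lemma continuous_into_I01 {Z : topologicalType} (f : Z -> I01) :
  continuous (ival \o f) -> continuous f.
Proof. exact: continuous_comp_initial. Qed.

Definition clamp01R (r : R) : R := Num.min (Num.max r 0) 1.

Lemma clamp01R_in r : clamp01R r \in unit_interval.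
Proof.
apply/mem_set; rewrite /unit_interval /= in_itv /= /clamp01R.
by rewrite le_min ge_min le_max lexx ler01 !orbT lexx orbT.
Qed.

Lemma clamp01R_id r : 0 <= r <= 1 -> clamp01R r = r.
Proof. by case/andP=> r0 r1; rewrite /clamp01R (max_idPl r0) (min_idPl r1). Qed.

Lemma clamp01R_continuous : continuous clamp01R.
Proof.
move=> x; apply: (@continuous_min _ R (fun r => Num.max r 0) (cst 1));
  last exact: cvg_cst.
by apply: (@continuous_max _ R id (cst 0)) => //; exact: cvg_cst.
Qed.

Definition clamp01 (r : R) : I01 := exist _ (clamp01R r) (clamp01R_in r).

Lemma ival_clamp01 r : ival (clamp01 r) = clamp01R r.
Proof. by rewrite /ival set_valE. Qed.

Lemma ivalK : cancel ival clamp01.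
Proof.
by move=> t; apply: ival_inj; rewrite ival_clamp01 clamp01R_id ?ival_ge0_le1.
Qed.

Lemma clamp01_0 : clamp01 0 = i0. Proof. by rewrite -ival0 ivalK. Qed.
Lemma clamp01_1 : clamp01 1 = i1. Proof. by rewrite -ival1 ivalK. Qed.

Lemma clamp01_continuous : continuous clamp01.
Proof.
apply: continuous_into_I01 => x /=; rewrite /comp.
under eq_fun do rewrite ival_clamp01.
exact: clamp01R_continuous.
Qed.

Lemma I01_compact : compact [set: I01].
Proof.
have -> : [set: I01] = clamp01 @` `[0, 1].
  apply/seteqP; split => t // _; exists (ival t); last exact: ivalK.
  by rewrite /= in_itv /= ival_ge0_le1.
apply: continuous_compact; last exact: segment_compact.
exact: continuous_subspaceT clamp01_continuous.
Qed.

Lemma I01_hausdorff : hausdorff_space I01.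
Proof.
rewrite open_hausdorff => s t st.
have : ival s != ival t by apply: contra st => /eqP/ival_inj ->.
have := @Rhausdorff R; rewrite open_hausdorff => /[apply].
case=> -[A B] /= [sA tB] [oA oB AB].
exists (ival @^-1` A, ival @^-1` B) => /=.
  by split; rewrite inE /=; move: sA tB; rewrite !inE.
split; [by exists A | by exists B |].
apply/eqP/seteqP; split => // r [Ar Br]; move/eqP: AB => AB.
by have : (A `&` B) (ival r) by []; rewrite AB.
Qed.

Lemma I01_locally_compact : locally_compact [set: I01].
Proof.
move=> t _; exists setT; first exact: filterT.
by split; [exact: I01_compact | exact: closedT].
Qed.

Lemma closed_ival_le {Z : topologicalType} (c : R) :
  closed [set p : Z * I01 | ival p.2 <= c].
Proof.
have civ : continuous (fun p : Z * I01 => ival p.2).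
  exact: comp_continuous snd_continuous ival_continuous.
have cD : closed [set x : R | x <= c] by exact: closed_le.
exact: (preimage_closed (fun p _ => civ p) cD).
Qed.

Lemma closed_ival_ge {Z : topologicalType} (c : R) :
  closed [set p : Z * I01 | c <= ival p.2].
Proof.
have civ : continuous (fun p : Z * I01 => ival p.2).
  exact: comp_continuous snd_continuous ival_continuous.
have cD : closed [set x : R | c <= x] by exact: closed_ge.
exact: (preimage_closed (fun p _ => civ p) cD).
Qed.

End UnitInterval.

Section Homotopies.
Context {Z Y : topologicalType}.
Implicit Types F H : Z * I01 -> Y.

Lemma reparam_continuous H (f : R -> R) : continuous H -> continuous f ->
  continuous (fun p : Z * I01 => H (p.1, clamp01 (f (ival p.2)))).
Proof.
move=> cH cf; apply: (comp_continuous _ cH); apply: pair_continuous.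
  exact: fst_continuous.
apply: (comp_continuous _ clamp01_continuous); apply: (comp_continuous _ cf).
exact: comp_continuous snd_continuous ival_continuous.
Qed.

Definition hrev H (p : Z * I01) : Y := H (p.1, clamp01 (1 - ival p.2)).

Lemma hrev0 H z : hrev H (z, i0) = H (z, i1).
Proof. by rewrite /hrev /= ival0 subr0 clamp01_1. Qed.

Lemma hrev1 H z : hrev H (z, i1) = H (z, i0).
Proof. by rewrite /hrev /= ival1 subrr clamp01_0. Qed.

Lemma hrev_continuous H : continuous H -> continuous (hrev H).
Proof.
move=> cH; apply: (reparam_continuous (f := fun r => 1 - r)) => // r.
by apply: (@continuousB _ R^o R (cst 1) id); [exact: cvg_cst | exact: cvg_id].
Qed.

Definition hcat F H (p : Z * I01) : Y :=
  if ival p.2 <= 2^-1 then F (p.1, clamp01 (2 * ival p.2))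
  else H (p.1, clamp01 (2 * ival p.2 - 1)).

Lemma hcat0 F H z : hcat F H (z, i0) = F (z, i0).
Proof. by rewrite /hcat /= ival0 invr_ge0 ler0n mulr0 clamp01_0. Qed.

Lemma hcat1 F H z : hcat F H (z, i1) = H (z, i1).
Proof.
rewrite /hcat /= ival1 ifF; last by apply/negbTE; rewrite -ltNge; lra.
by rewrite -clamp01_1; congr (H (z, clamp01 _)); lra.
Qed.

Lemma hcat_continuous F H : continuous F -> continuous H ->
  (forall z, F (z, i1) = H (z, i0)) -> continuous (hcat F H).
Proof.
move=> cF cH FH; apply/continuous_subspace_setT.
pose lo := [set p : Z * I01 | ival p.2 <= 2^-1].
pose hi := [set p : Z * I01 | 2^-1 <= ival p.2].
have -> : [set: Z * I01] = lo `|` hi.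
  apply/seteqP; split => p // _; rewrite /lo /hi /=.
  by case: (lerP (ival p.2) 2^-1) => h; [left | right; exact: ltW].
apply: withinU_continuous; [exact: closed_ival_le | exact: closed_ival_ge | |].
  apply: (@subspace_eq_continuous _ _ _
    (fun p : Z * I01 => F (p.1, clamp01 (2 * ival p.2)))).
    by move=> p /set_mem plo; rewrite /from_subspace /hcat /= ifT.
  apply: continuous_subspaceT; apply: (reparam_continuous (f := fun r => 2 * r)) cF _.
  exact: mulrl_continuous.
apply: (@subspace_eq_continuous _ _ _
  (fun p : Z * I01 => H (p.1, clamp01 (2 * ival p.2 - 1)))).
  move=> p /set_mem phi; rewrite /from_subspace /hcat /=; case: ifPn => // plo.
  have -> : ival p.2 = 2^-1 by apply/eqP; rewrite eq_le plo phi.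
  have -> : 2 * 2^-1 = 1 :> R by lra.
  by rewrite subrr clamp01_0 clamp01_1 FH.
apply: continuous_subspaceT.
apply: (reparam_continuous (f := fun r => 2 * r - 1)) cH _ => r.
apply: (@continuousB _ R^o R (fun r : R => 2 * r) (cst 1)).
  exact: mulrl_continuous.
exact: cvg_cst.
Qed.

Lemma reindex_continuous {W : topologicalType} (w : W -> Z) H :
  continuous w -> continuous H -> continuous (fun p : W * I01 => H (w p.1, p.2)).
Proof.
move=> cw cH; apply: (comp_continuous _ cH).
apply: pair_continuous; last exact: snd_continuous.
exact: comp_continuous fst_continuous cw.
Qed.

End Homotopies.

Section Homotopic.
Context {A B : topologicalType}.

Lemma homotopic_refl (f : A -> B) : continuous f -> homotopic f f.
Proof.
move=> cf; exists (fun p => f p.1); split => //.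
exact: comp_continuous fst_continuous cf.
Qed.

Lemma eq_homotopic (f f' g : A -> B) : f =1 f' -> homotopic f g -> homotopic f' g.
Proof.
move=> ff' [H [cH [H0 H1]]]; exists H.
by split => //; split => // z; rewrite H0 ff'.
Qed.

End Homotopic.

Section PathSpace.
Import ArrowAsCompactOpen.

Lemma pev_joint_continuous (X : topologicalType) :
  continuous (fun p : PX X * I01 => pev p.1 p.2).
Proof.
have -> : (fun p : PX X * I01 => pev p.1 p.2) = uncurry (fun g => set_val g).
  by apply: funext => -[g t].
apply: continuous_uncurry I01_locally_compact I01_hausdorff _ _.
  exact: initial_continuous.
exact: (fun g => set_valP g).
Qed.

Context {Z X : topologicalType}.

Lemma pev_continuous (c : Z -> PX X) :
  continuous c -> continuous (fun p : Z * I01 => pev (c p.1) p.2).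
Proof.
move=> cc; apply: (reindex_continuous (H := fun q : PX X * I01 => pev q.1 q.2) cc).
exact: pev_joint_continuous.
Qed.

Lemma pev_at_continuous (c : Z -> PX X) (t : I01) :
  continuous c -> continuous (fun z => pev (c z) t).
Proof.
move=> cc; apply: (comp_continuous (f := fun z : Z => (z, t))
  (g := fun p : Z * I01 => pev (c p.1) p.2)); last exact: pev_continuous.
by apply: pair_continuous; [move=> z; exact: cvg_id | exact: cst_continuous].
Qed.

Variables (H : Z * I01 -> X) (cH : continuous H).

Definition hpath (z : Z) : PX X :=
  exist _ (curry H z : {compact-open, I01 -> X})
    (mem_set ((continuous_curry cH).2 z)).

Lemma pev_hpath z t : pev (hpath z) t = H (z, t).
Proof. by rewrite /pev set_valE. Qed.

Lemma hpath_continuous : continuous hpath.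
Proof.
apply: (@continuous_comp_initial _ _ _ set_val hpath).
exact: continuous_curry_fun cH.
Qed.

End PathSpace.

Section Covers.

Lemma least_le (P Q : nat -> Prop) :
  (forall n, P n -> Q n) -> natinf_le (least Q) (least P).
Proof.
move=> PQ; rewrite /least.
case: pselect => [hQ|nQ]; case: pselect => [hP|nP] //=.
  case: (ex_minnP hP) => m /asboolP Pm _.
  by case: (ex_minnP hQ) => m' _; apply; apply/asboolP; exact: PQ.
by case: hP => m /asboolP Pm; apply: nQ; exists m; apply/asboolP; exact: PQ.
Qed.

Lemma natinf_le_anti a b : natinf_le a b -> natinf_le b a -> a = b.
Proof.
by case: a; case: b => //= m n mn nm; congr Some; apply/eqP; rewrite eqn_leq mn.
Qed.

Lemma natinf_min_eq (f : nat -> natinf) j :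
  (forall k, natinf_le (f j) (f k)) -> natinf_min f = f j.
Proof.
move=> fj_min; rewrite /natinf_min /least; case: pselect => [h|nh].
  case: (ex_minnP h) => m /asboolP [k fkm] m_min.
  have := fj_min k; case E : (f j) => [v|] fjk; last by case: (f k) fjk fkm.
  congr Some; apply/eqP; rewrite eqn_leq; apply/andP; split.
    by apply: m_min; apply/asboolP; exists j; rewrite E /=.
  by case: (f k) fjk fkm => //= w; exact: leq_trans.
case E : (f j) => [v|] //; exfalso; apply: nh.
by exists v; apply/asboolP; exists j; rewrite E /=.
Qed.

Lemma least_open_cover_le_preimage {A B : topologicalType} (f : A -> B)
    (Q : set B -> Prop) (Q' : set A -> Prop) :
  continuous f -> (forall V, open V -> Q V -> Q' (f @^-1` V)) ->
  natinf_le (least (fun n => open_cover_with n Q'))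
            (least (fun n => open_cover_with n Q)).
Proof.
move=> cf QQ'; apply: least_le => n [U [oU [cU QU]]].
exists (fun i => f @^-1` U i); split.
  by move=> i; move/continuousP: cf; apply.
by split => [|i]; [rewrite -preimage_bigcup cU preimage_setT | exact: QQ'].
Qed.

Lemma least_open_cover_le {B : topologicalType} (Q Q' : set B -> Prop) :
  (forall V, open V -> Q V -> Q' V) ->
  natinf_le (least (fun n => open_cover_with n Q'))
            (least (fun n => open_cover_with n Q)).
Proof.
move=> QQ'; apply: least_le => n [U [oU [cU QU]]].
by exists U; split => //; split => // i; exact: QQ'.
Qed.

End Covers.

Section Corestriction.
Context {A B : topologicalType} (f : A -> B) (V : set B).

Lemma corestrict_in (u : set_type (f @^-1` V)) : f (set_val u) \in V.
Proof. exact/mem_set/(set_valP u). Qed.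

Definition corestrict (u : set_type (f @^-1` V)) : set_type V :=
  @exist _ (fun b => b \in V) _ (corestrict_in u).

Lemma corestrictE u : set_val (corestrict u) = f (set_val u).
Proof. by rewrite set_valE. Qed.

Lemma corestrict_continuous : continuous f -> continuous corestrict.
Proof.
move=> cf; apply: continuous_comp_initial.
have -> : set_val \o corestrict = f \o set_val.
  by apply: funext => u; rewrite /= corestrictE.
by apply: comp_continuous => //; exact: set_val_continuous.
Qed.

End Corestriction.
Arguments corestrict {A B} f V u.

Lemma cat_map_le_LScat {A B : topologicalType} (f : A -> B) :
  continuous f -> natinf_le (cat_map f) (LScat B).
Proof.
move=> cf; apply: (least_open_cover_le_preimage cf) => V _ [b [H [cH [H0 H1]]]].
exists b; exists (fun p => H (corestrict f V p.1, p.2)); split.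
  by apply: reindex_continuous => //; exact: corestrict_continuous cf.
by split => u /=; rewrite ?H1 // H0 /= corestrictE.
Qed.

Section Chains.
Context {G X : topologicalType} (a : topGroupAction G X).
Local Notation rho := (orbit_map a).

Lemma orbit_map_continuous : continuous rho.
Proof. exact: pi_continuous. Qed.

Lemma orbit_mapP x y : rho x = rho y <-> same_orbit a x y.
Proof.
split => [/eqquotP|?]; first by move=> /asboolP.
by apply/eqquotP; exact/asboolP.
Qed.

Lemma Pk_path_continuous {Z : topologicalType} k (c : Z -> Pk a k) (i : 'I_k) :
  continuous c -> continuous (fun z => Pk_path (c z) i).
Proof.
move=> cc; apply: (comp_continuous (g := fun gs : Pk a k => Pk_path gs i) cc).
apply: (comp_continuous (g := fun gs : {ptws 'I_k -> PX X} => gs i)).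
  exact: set_val_continuous.
exact: ptws_eval_continuous.
Qed.

Definition chain2 (g1 g2 : PX X) : {ptws 'I_2 -> PX X} :=
  fun i => if nat_of_ord i == 0%N then g1 else g2.

Definition chains k := [set gs : {ptws 'I_k -> PX X} | forall i j : 'I_k,
  nat_of_ord j = (nat_of_ord i).+1 -> same_orbit a (pev (gs i) i1) (pev (gs j) i0)].
Arguments chains : clear implicits.

Lemma chain2_in g1 g2 : same_orbit a (pev g1 i1) (pev g2 i0) ->
  chain2 g1 g2 \in chains 2.
Proof. by move=> h; apply/mem_set => -[[|[|i]] ?] [[|[|j]] ?]. Qed.

Definition Pk2 g1 g2 (h : same_orbit a (pev g1 i1) (pev g2 i0)) : Pk a 2 :=
  @exist _ (fun gs => gs \in chains 2) _ (chain2_in h).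

Lemma Pk_path_Pk2 g1 g2 h (i : 'I_2) :
  Pk_path (@Pk2 g1 g2 h) i = if nat_of_ord i == 0%N then g1 else g2.
Proof. by rewrite /Pk_path set_valE. Qed.

Lemma Pk2_continuous {Z : topologicalType} (g1 g2 : Z -> PX X)
    (h : forall z, same_orbit a (pev (g1 z) i1) (pev (g2 z) i0)) :
  continuous g1 -> continuous g2 -> continuous (fun z => Pk2 (h z)).
Proof.
move=> c1 c2; apply: (@continuous_comp_initial _ _ _ set_val).
apply: (@continuous_into_ptws _ _ _ (fun z => chain2 (g1 z) (g2 z))) => i.
by rewrite /chain2; case: (nat_of_ord i == 0%N).
Qed.

Lemma chain_orbit_homotopy n {Z : topologicalType} (c : Z -> 'I_n.+1 -> PX X) :
  (forall i, continuous (fun z => c z i)) ->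
  (forall z (i j : 'I_n.+1), nat_of_ord j = (nat_of_ord i).+1 ->
     same_orbit a (pev (c z i) i1) (pev (c z j) i0)) ->
  exists H : Z * I01 -> OrbitSpace a, continuous H /\
    (forall z, H (z, i0) = rho (pev (c z ord0) i0)) /\
    (forall z, H (z, i1) = rho (pev (c z ord_max) i1)).
Proof.
have rho_pev_continuous (d : Z -> PX X) : continuous d ->
    continuous (fun p : Z * I01 => rho (pev (d p.1) p.2)).
  by move=> cd; apply: comp_continuous orbit_map_continuous; exact: pev_continuous.
elim: n c => [|n IH] c cc chain.
  exists (fun p => rho (pev (c p.1 ord0) p.2)); split.
    exact: rho_pev_continuous (cc ord0).
  by split => z //=; have -> : (ord_max : 'I_1) = ord0 by exact: val_inj.
pose w := widen_ord (leqnSn n.+1).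
have [H [cH [H0 H1]]] := IH (fun z i => c z (w i)) (fun i => cc _)
  (fun z i j e => chain z (w i) (w j) e).
exists (hcat H (fun p => rho (pev (c p.1 ord_max) p.2))); split.
  apply: hcat_continuous => // [|z]; first exact: (rho_pev_continuous _ (cc ord_max)).
  by rewrite H1; apply/orbit_mapP; exact: chain.
split => z; rewrite ?hcat0 ?hcat1 // H0.
by congr (rho (pev (c z _) i0)); exact: val_inj.
Qed.

Lemma Pk_orbit_homotopy {Z : topologicalType} k (s : Z -> Pk a k.+1) :
  continuous s ->
  exists H : Z * I01 -> OrbitSpace a, continuous H /\
    (forall z, H (z, i0) = rho (pev (Pk_path (s z) ord0) i0)) /\
    (forall z, H (z, i1) = rho (pev (Pk_path (s z) ord_max) i1)).
Proof.
move=> cs; apply: (chain_orbit_homotopy (c := fun z => Pk_path (s z))) => [i|z].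
  exact: Pk_path_continuous.
exact: (set_valP (s z)).
Qed.

End Chains.

Section OrbitFibration.
Context {G X : topologicalType} (a : topGroupAction G X).
Hypothesis fib : fibration (orbit_map a).
Local Notation rho := (orbit_map a).

Lemma nullhomotopic_orbit_map_section (x0 : X) (U : set X) :
  path_connected (OrbitSpace a) -> nullhomotopic (rho \o @set_val X U) ->
  has_homotopy_section (@q_k _ _ a x0 2) U.
Proof.
move=> pc [b [H [cH [H0 H1]]]].
have [Ht [cHt [rhoHt Ht0]]] := fib cH (set_val_continuous U) (fun u => esym (H0 u)).
have [c [cc [c0 c1]]] := pc (rho x0) b.
have [L [cL [rhoL L0]]] := @fib U (fun p => c p.2) (fun=> x0)
  (comp_continuous snd_continuous cc) (@cst_continuous _ _ x0) (fun=> esym c0).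
have link u : same_orbit a (pev (hpath cL u) i1)
                           (pev (hpath (hrev_continuous cHt) u) i0).
  by apply/orbit_mapP; rewrite !pev_hpath hrev0 rhoL rhoHt /= c1 H1.
pose based := [set gs : Pk a 2 | pev (Pk_path gs ord0) i0 = x0].
have starts u : Pk2 (link u) \in based.
  by apply/mem_set; rewrite /based /= Pk_path_Pk2 /= pev_hpath L0.
exists (fun u => @exist _ (fun gs => gs \in based) _ (starts u)); split.
  apply: (@continuous_comp_initial _ _ _ set_val).
  have -> : set_val \o (fun u => @exist _ (fun gs => gs \in based) _ (starts u)) =
            fun u => Pk2 (link u).
    by apply: funext => u; rewrite /= set_valE.
  by apply: Pk2_continuous; exact: hpath_continuous.
apply: eq_homotopic (homotopic_refl (set_val_continuous U)) => u.
by rewrite /q_k /= set_valE /= Pk_path_Pk2 /= pev_hpath hrev1 Ht0.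
Qed.

Lemma orbit_map_section_nullhomotopic (x0 : X) k (U : set X) :
  has_homotopy_section (@q_k _ _ a x0 k.+1) U ->
  nullhomotopic (rho \o @set_val X U).
Proof.
case=> s [cs [K [cK [K0 K1]]]].
have [H [cH [H0 H1]]] := Pk_orbit_homotopy (comp_continuous cs (set_val_continuous _)).
have cK' : continuous (rho \o K).
  by apply: comp_continuous cK _; exact: orbit_map_continuous.
exists (rho x0); exists (hcat (hrev (rho \o K)) (hrev H)); split.
  apply: hcat_continuous; [exact: hrev_continuous | exact: hrev_continuous |].
  by move=> u; rewrite hrev1 hrev0 /= K0 H1.
split => u; rewrite ?hcat0 ?hcat1 ?hrev0 ?hrev1 /= ?K1 // H0.
by congr rho; exact: (set_valP (s u)).
Qed.

Lemma pi_k_section_pi_2 k (U : set (X * X)) :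
  has_homotopy_section (@pi_k _ _ a k.+1) U ->
  has_homotopy_section (@pi_k _ _ a 2) U.
Proof.
case=> s [cs hom].
have [H [cH [H0 H1]]] := Pk_orbit_homotopy cs.
have cstart : continuous (fun u => pev (Pk_path (s u) ord0) i0).
  by apply: pev_at_continuous; exact: Pk_path_continuous.
have [L [cL [rhoL L0]]] := fib cH cstart (fun u => esym (H0 u)).
have cend : continuous (fun p : U * I01 => pev (Pk_path (s p.1) ord_max) i1).
  apply: (comp_continuous (g := fun u => pev (Pk_path (s u) ord_max) i1)).
    exact: fst_continuous.
  by apply: pev_at_continuous; exact: Pk_path_continuous.
have link u : same_orbit a (pev (hpath cL u) i1) (pev (hpath cend u) i0).
  by apply/orbit_mapP; rewrite !pev_hpath rhoL H1.
exists (fun u => Pk2 (link u)); split.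
  by apply: Pk2_continuous; exact: hpath_continuous.
apply: eq_homotopic hom => u.
by rewrite /pi_k /= !Pk_path_Pk2 /= !pev_hpath L0.
Qed.

Definition orbit_map2 (p : X * X) : OrbitSpace a * OrbitSpace a :=
  (rho p.1, rho p.2).

Lemma orbit_map2_continuous : continuous orbit_map2.
Proof.
by apply: pair_continuous; apply: comp_continuous;
  [exact: fst_continuous | exact: orbit_map_continuous
  |exact: snd_continuous | exact: orbit_map_continuous].
Qed.

(* Over (x, y): L1 lifts the first coordinate of K backwards from x, the
   first path lifts the planned path from the end of L1, and the second one
   lifts the second coordinate of K into y.  pi_2 of the pair is then
   (L1 1, y), which L1 joins back to (x, y). *)
Lemma path_fib_section_pi_2 (V : set (OrbitSpace a * OrbitSpace a)) :
  has_homotopy_section (@path_fib (OrbitSpace a)) V ->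
  has_homotopy_section (@pi_k _ _ a 2) (orbit_map2 @^-1` V).
Proof.
case=> sg [csg [K [cK [K0 K1]]]].
pose U := orbit_map2 @^-1` V; pose w := corestrict orbit_map2 V.
have cw : continuous w by exact: corestrict_continuous orbit_map2_continuous.
pose back1 := hrev (fun p : U * I01 => (K (w p.1, p.2)).1).
pose back2 := hrev (fun p : U * I01 => (K (w p.1, p.2)).2).
have cKw : continuous (fun p : U * I01 => K (w p.1, p.2)) by exact: reindex_continuous.
have cback1 : continuous back1.
  by apply: hrev_continuous; exact: comp_continuous cKw fst_continuous.
have cback2 : continuous back2.
  by apply: hrev_continuous; exact: comp_continuous cKw snd_continuous.
have cx : continuous (fun u : U => (set_val u).1).
  exact: comp_continuous (set_val_continuous _) fst_continuous.
have cy : continuous (fun u : U => (set_val u).2).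
  exact: comp_continuous (set_val_continuous _) snd_continuous.
have back1_start u : rho (set_val u).1 = back1 (u, i0).
  by rewrite /back1 hrev0 /= K1 corestrictE.
have back2_start u : rho (set_val u).2 = back2 (u, i0).
  by rewrite /back2 hrev0 /= K1 corestrictE.
have [L1 [cL1 [rhoL1 L10]]] := fib cback1 cx back1_start.
have [L3 [cL3 [rhoL3 L30]]] := fib cback2 cy back2_start.
have cL1end : continuous (fun u : U => L1 (u, i1)).
  apply: (comp_continuous (g := L1)) cL1.
  by apply: pair_continuous; [move=> u; exact: cvg_id | exact: cst_continuous].
have plan_start u : rho (L1 (u, i1)) = pev (sg (w u)) i0.
  by rewrite rhoL1 /back1 hrev1 /= K0.
have [L2 [cL2 [rhoL2 L20]]] :=
  fib (pev_continuous (comp_continuous cw csg)) cL1end plan_start.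
have link u : same_orbit a (pev (hpath cL2 u) i1)
                           (pev (hpath (hrev_continuous cL3) u) i0).
  by apply/orbit_mapP; rewrite !pev_hpath hrev0 rhoL2 rhoL3 /back2 hrev1 /= K0.
exists (fun u => Pk2 (link u)); split.
  by apply: Pk2_continuous; exact: hpath_continuous.
exists (fun p : U * I01 => (hrev L1 p, (set_val p.1).2)); split.
  apply: pair_continuous; first exact: hrev_continuous.
  exact: comp_continuous fst_continuous cy.
split => u.
  by rewrite hrev0 /pi_k /= !Pk_path_Pk2 /= !pev_hpath L20 hrev1 L30.
by rewrite hrev1 L10; case: (set_val u).
Qed.

End OrbitFibration.

Theorem mainTheorem10 (G X : topologicalType) (a : topGroupAction G X)
    (x0 : X) :
  path_connected (OrbitSpace a) ->
  fibration (orbit_map a) ->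
  (catGinf a x0 = catG a x0 2 /\ catG a x0 2 = cat_map (orbit_map a) /\
     natinf_le (cat_map (orbit_map a)) (LScat (OrbitSpace a))) /\
  (TCGinf a = TCG a 2 /\ natinf_le (TCG a 2) (TC (OrbitSpace a))).
Proof.
move=> pc fib.
have catG2_le : natinf_le (catG a x0 2) (cat_map (orbit_map a)).
  apply: least_open_cover_le => U _.
  exact: nullhomotopic_orbit_map_section.
have le_catG k : natinf_le (cat_map (orbit_map a)) (catG a x0 k.+1).
  apply: least_open_cover_le => U _.
  exact: orbit_map_section_nullhomotopic.
have catG2E : catG a x0 2 = cat_map (orbit_map a).
  exact: natinf_le_anti catG2_le (le_catG 1%N).
have TCG2_le k : natinf_le (TCG a 2) (TCG a k.+1).
  by apply: least_open_cover_le => U _; exact: pi_k_section_pi_2.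
split; split.
- by apply: (@natinf_min_eq _ 1%N) => k; rewrite catG2E; exact: le_catG.
- split; first exact: catG2E.
  by apply: cat_map_le_LScat; exact: orbit_map_continuous.
- exact: (@natinf_min_eq (fun k => TCG a k.+1) 1%N).
- apply: (least_open_cover_le_preimage (@orbit_map2_continuous _ _ a)) => V _.
  exact: path_fib_section_pi_2.
Qed.
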